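(* Let $(X_n,q_{n,n+1})_{n\in\mathbb{N}}$ be an inverse sequence of finite $T_0$ topological spaces and continuous maps. For each $n$ let $C_n$ be a core of $X_n$, $i_n:C_n\to X_n$ the inclusion, and $r_n:X_n\to C_n$ a retraction with $r_n\circ i_n=\mathrm{id}_{C_n}$ and $i_n\circ r_n$ homotopic to $\mathrm{id}_{X_n}$. Then $(X_n,q_{n,n+1})$ is isomorphic in pro-$HTop$ to the inverse sequence $(C_n, r_n\circ q_{n,n+1}\circ i_{n+1})$ (the core of $(X_n,q_{n,n+1})$).
   Context: Finite $T_0$ spaces are identified with finite posets ($x\le y$ iff $U_x\subseteq U_y$, where $U_x$ is the minimal open set containing $x$); let $F_x=\{y\mid y\ge x\}$. A point $x$ is a down (resp. up) beat point if $U_x\setminus\{x\}$ has a maximum (resp. $F_x\setminus\{x\}$ has a minimum). A core of a finite space $X$ is a subspace obtained by removing beat points one at a time until none remain. $HTop$ is the homotopy category of topological spaces and pro-$HTop$ its pro-category of inverse systems (morphisms of inverse sequences represented by an increasing index map $f:\mathbb{N}\to\mathbb{N}$ and maps $f_n:X_{f(n)}\to Y_n$ commuting up to homotopy with bonding maps, modulo the usual equivalence). *)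

From HB Require Import structures.
From mathcomp Require Import all_boot all_order all_algebra.
From mathcomp Require Import all_classical all_reals all_analysis.
From mathcomp Require Import Rstruct Rstruct_topology.
Set Implicit Arguments. Unset Strict Implicit. Unset Printing Implicit Defensive.
Import Order.TTheory GRing.Theory Num.Theory.
Local Open Scope classical_set_scope.
Local Open Scope ring_scope.

Notation Real := Rdefinitions.R.

Definition homotopic {X Y : topologicalType} (f g : X -> Y) : Prop :=
  exists H : X * Real -> Y,
    {within [set p : X * Real | 0 <= p.2 <= 1], continuous H} /\
    (forall x, H (x, 0) = f x) /\ (forall x, H (x, 1) = g x).

(** Specialization order of a (finite) space: x <= y iff U_x ⊆ U_y,
    i.e. every open set containing y contains x. *)
Definition spec_le {X : topologicalType} (x y : X) : Prop :=
  forall U : set X, open U -> U y -> U x.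
Definition spec_lt {X : topologicalType} (x y : X) : Prop :=
  spec_le x y /\ x <> y.

Definition down_beat_point {X : topologicalType} (A : set X) (x : X) : Prop :=
  A x /\ exists m, A m /\ spec_lt m x /\
    (forall y, A y -> spec_lt y x -> spec_le y m).
Definition up_beat_point {X : topologicalType} (A : set X) (x : X) : Prop :=
  A x /\ exists m, A m /\ spec_lt x m /\
    (forall y, A y -> spec_lt x y -> spec_le m y).
Definition beat_point {X : topologicalType} (A : set X) (x : X) : Prop :=
  down_beat_point A x \/ up_beat_point A x.

Inductive beat_reduces {X : topologicalType} : set X -> set X -> Prop :=
  | br_refl A : beat_reduces A A
  | br_step A C x : beat_point A x -> beat_reduces (A `\ x) C ->
      beat_reduces A C.

Definition is_core {X : topologicalType} (C : set X) : Prop :=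
  beat_reduces [set: X] C /\ forall x, ~ beat_point C x.

Definition finite_T0 (X : topologicalType) : Prop :=
  finite_set [set: X] /\ kolmogorov_space X.

Record invseq := InvSeq {
  iobj : nat -> topologicalType;
  ibond : forall n, iobj n.+1 -> iobj n }.

(* bond_iter s n k = q_{n, k+n} : iobj s (k + n) -> iobj s n *)
Fixpoint bond_iter (s : invseq) (n k : nat) : iobj s (k + n) -> iobj s n :=
  match k return iobj s (k + n) -> iobj s n with
  | 0 => fun x => x
  | k'.+1 => fun x => @bond_iter s n k' (@ibond s (k' + n) x)
  end.

Definition pbond (s : invseq) (i j : nat) (h : (i <= j)%N) :
    iobj s j -> iobj s i :=
  fun x => @bond_iter s i (j - i) (eq_rect_r (iobj s) x (subnK h)).

(** Raw data of a morphism of inverse sequences X -> Y in pro-HTop: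
    index map a and level maps h n : X_(a n) -> Y_n. *)
Definition is_pro_mor (X Y : invseq) (a : nat -> nat)
    (h : forall n, iobj X (a n) -> iobj Y n) : Prop :=
  {homo a : n m / (n <= m)%N} /\
  (forall n, continuous (h n)) /\
  (forall n m (hnm : (n <= m)%N) (hanm : (a n <= a m)%N),
     homotopic (h n \o @pbond X _ _ hanm) (@pbond Y _ _ hnm \o h m)).

Definition pro_equiv (X Y : invseq) (a : nat -> nat)
    (h : forall n, iobj X (a n) -> iobj Y n) (b : nat -> nat)
    (k : forall n, iobj X (b n) -> iobj Y n) : Prop :=
  forall n, exists m (ha : (a n <= m)%N) (hb : (b n <= m)%N),
    homotopic (h n \o @pbond X _ _ ha) (k n \o @pbond X _ _ hb).

Definition pro_comp_idx (a b : nat -> nat) : nat -> nat := fun n => a (b n).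
Definition pro_comp (X Y Z : invseq) (a : nat -> nat)
    (h : forall n, iobj X (a n) -> iobj Y n) (b : nat -> nat)
    (k : forall n, iobj Y (b n) -> iobj Z n) :
    forall n, iobj X (pro_comp_idx a b n) -> iobj Z n :=
  fun n => k n \o h (b n).
Definition pro_id (X : invseq) : forall n, iobj X (id n) -> iobj X n :=
  fun n x => x.

Definition pro_isomorphic (X Y : invseq) : Prop :=
  exists (a : nat -> nat) (h : forall n, iobj X (a n) -> iobj Y n)
         (b : nat -> nat) (k : forall n, iobj Y (b n) -> iobj X n),
    is_pro_mor h /\ is_pro_mor k /\
    pro_equiv (pro_comp h k) (@pro_id X) /\
    pro_equiv (pro_comp k h) (@pro_id Y).

Definition core_seq (X : nat -> topologicalType)
    (q : forall n, X n.+1 -> X n) (C : forall n, set (X n))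
    (r : forall n, X n -> set_type (C n)) : invseq :=
  @InvSeq (fun n => set_type (C n))
          (fun n c => r n (q n (set_val c))).

From HB Require Import structures.
From mathcomp Require Import all_boot all_order all_algebra.
From mathcomp Require Import all_classical all_reals all_analysis.
From mathcomp Require Import Rstruct Rstruct_topology lra.
Import Order.TTheory GRing.Theory Num.Theory.
Local Open Scope classical_set_scope.
Local Open Scope ring_scope.

(** The retractions [r_n] and the inclusions [i_n] are level maps between the
    two inverse sequences.  Both commute with the bonding maps up to homotopy,
    because [i_(n+1) \o r_(n+1)] is homotopic to the identity and can be
    inserted after [q_(n,n+1)] (for [r]) or removed before it (for [i]); so
    they are morphisms of pro-HTop.  Levelwise, [r_n \o i_n = id] and
    [i_n \o r_n] is homotopic to the identity, so they are mutually inverse. *)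

Lemma within_continuous_precomp {T U V : topologicalType} {A : set T} {B : set U}
    {g : T -> U} {f : U -> V} :
  continuous g -> (forall x, A x -> B (g x)) ->
  {within B, continuous f} -> {within A, continuous (f \o g)}.
Proof.
move=> cg gAB /subspace_continuousP cf; apply/subspace_continuousP => x Ax.
have gA : g @ within A (nbhs x) --> within B (nbhs (g x)).
  move=> W /=; rewrite /within !nbhs_simpl => /(cg x); rewrite /= nbhs_simpl.
  exact: (@filterS _ (nbhs x) _ _ _ (fun y BW Ay => BW (gAB y Ay))).
exact: (cvg_comp g (from_subspace B f) gA (cf _ (gAB _ Ax))).
Qed.

Lemma continuous_time_affine {X Y : topologicalType} {u : X -> Y} (c d : Real) :
  continuous u -> continuous (fun p : X * Real => (u p.1, c * p.2 + d)).
Proof.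
move=> cu z; apply: (@cvg_pair _ _ _ (nbhs z) (nbhs (u z.1)) (nbhs (c * z.2 + d))).
  exact: (continuous_comp cvg_fst (cu _)).
have affine_cont : continuous (fun t : Real => c * t + d).
  by move=> t; apply: (@cvgD _ Real^o); [exact: mulrl_continuous | exact: cvg_cst].
exact: (continuous_comp cvg_snd (affine_cont _)).
Qed.

Lemma homotopy_reparam_continuous {W X Y : topologicalType} {H : X * Real -> Y}
    {A : set (W * Real)} (u : W -> X) (c d : Real) :
  {within [set p : X * Real | 0 <= p.2 <= 1], continuous H} -> continuous u ->
  (forall p, A p -> 0 <= c * p.2 + d <= 1) ->
  {within A, continuous (fun p : W * Real => H (u p.1, c * p.2 + d))}.
Proof.
move=> cH cu Ac.
exact: within_continuous_precomp (continuous_time_affine c d cu) Ac cH.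
Qed.

Lemma closed_time_slab (X : topologicalType) (a b : Real) :
  closed [set p : X * Real | a <= p.2 <= b].
Proof.
have -> : [set p : X * Real | a <= p.2 <= b] =
          snd @^-1` ([set t | a <= t] `&` [set t | t <= b]).
  by apply/seteqP; split => p /= => [/andP[]|[] -> ->].
apply: preimage_closed => [p _|]; first exact: cvg_snd.
by apply: closedI; [exact: closed_ge | exact: closed_le].
Qed.

Section Homotopy.
Variables X Y : topologicalType.
Implicit Types f g h : X -> Y.

Lemma homotopic_refl f : continuous f -> homotopic f f.
Proof.
move=> cf; exists (f \o fst); split=> //.
apply: continuous_subspaceT => z.
exact: (continuous_comp cvg_fst (cf _)).
Qed.

Lemma homotopic_sym f g : homotopic f g -> homotopic g f.
Proof.
move=> [H [cH [H0 H1]]]; exists (fun p => H (p.1, -1 * p.2 + 1)); split.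
  apply: (homotopy_reparam_continuous id (-1) 1 cH (fun _ => cvg_id)).
  by move=> p /= /andP[? ?]; apply/andP; lra.
by split=> x /=; rewrite ?mulr0 ?mulr1 ?add0r ?addNr ?H0 ?H1.
Qed.

Lemma homotopic_trans f g h : homotopic f g -> homotopic g h -> homotopic f h.
Proof.
move=> [H1 [c1 [H10 H11]]] [H2 [c2 [H20 H21]]].
pose H p := if p.2 <= 2^-1 then H1 (p.1, 2 * p.2 + 0) else H2 (p.1, 2 * p.2 + -1).
exists H; split; last first.
  split=> x; rewrite /H /=; first by rewrite ifT ?mulr0 ?addr0 ?H10 //; lra.
  rewrite ifF; last by apply/negbTE; rewrite -ltNge; lra.
  by have -> : 2 * 1 + -1 = 1 :> Real by lra.
have -> : [set p : X * Real | 0 <= p.2 <= 1] =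
    [set p | 0 <= p.2 <= 2^-1] `|` [set p | 2^-1 <= p.2 <= 1].
  apply/seteqP; split=> p /=; last by case=> /andP[? ?]; apply/andP; lra.
  by move=> /andP[? ?]; case: (lerP p.2 2^-1) => ?; [left|right]; apply/andP; lra.
apply: withinU_continuous; [exact: closed_time_slab | exact: closed_time_slab | |].
  apply: (@subspace_eq_continuous _ _ _
           (from_subspace _ (fun p => H1 (p.1, 2 * p.2 + 0)))).
    by move=> p /set_mem /andP[_ p_le]; rewrite /from_subspace /H /= ifT.
  apply: (homotopy_reparam_continuous id 2 0 c1 (fun _ => cvg_id)).
  by move=> p /= /andP[? ?]; apply/andP; lra.
apply: (@subspace_eq_continuous _ _ _
         (from_subspace _ (fun p => H2 (p.1, 2 * p.2 + -1)))).
  move=> p /set_mem /andP[p_ge _]; rewrite /from_subspace /H /=; case: ifP => // p_le.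
  (* at the junction time 1/2 both halves give g *)
  have -> : p.2 = 2^-1 by lra.
  have -> : 2 * 2^-1 + 0 = 1 :> Real by lra.
  have -> : 2 * 2^-1 + -1 = 0 :> Real by lra.
  by rewrite H11 H20.
apply: (homotopy_reparam_continuous id 2 (-1) c2 (fun _ => cvg_id)).
by move=> p /= /andP[? ?]; apply/andP; lra.
Qed.

Lemma homotopic_postcomp (Z : topologicalType) f g (v : Y -> Z) :
  continuous v -> homotopic f g -> homotopic (v \o f) (v \o g).
Proof.
move=> cv [H [cH [H0 H1]]]; exists (v \o H); split.
  by apply: within_continuous_comp cH => y _; exact: cv.
by split=> x /=; rewrite ?H0 ?H1.
Qed.

Lemma homotopic_precomp (W : topologicalType) f g (u : W -> X) :
  continuous u -> homotopic f g -> homotopic (f \o u) (g \o u).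
Proof.
move=> cu [H [cH [H0 H1]]]; exists (fun p => H (u p.1, 1 * p.2 + 0)); split.
  apply: (homotopy_reparam_continuous u 1 0 cH cu).
  by move=> p /= /andP[? ?]; apply/andP; lra.
by split=> x /=; rewrite mul1r addr0 ?H0 ?H1.
Qed.

End Homotopy.

Arguments homotopic_refl {X Y f}.
Arguments homotopic_sym {X Y f g}.
Arguments homotopic_trans {X Y f g h}.
Arguments homotopic_postcomp {X Y Z f g v}.
Arguments homotopic_precomp {X Y W f g u}.

Section BondingMaps.
Context {s : invseq}.

Lemma pbondE (i k : nat) (h : (i <= k + i)%N) : pbond h = @bond_iter s i k.
Proof.
apply/funext => x; rewrite /pbond; move: (subnK h); rewrite addnK => e.
by rewrite (eq_irrelevance e erefl).
Qed.

Lemma pbond_refl (i : nat) (h : (i <= i)%N) : @pbond s i i h = id.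
Proof. exact: (@pbondE i 0). Qed.

Hypothesis cont_bond : forall n, continuous (@ibond s n).

Lemma continuous_bond_iter (n k : nat) : continuous (@bond_iter s n k).
Proof.
elim: k => [|k IH] x; first exact: cvg_id.
exact: (@continuous_comp _ _ _ (@ibond s (k + n)) _ x (cont_bond _ _) (IH _)).
Qed.

End BondingMaps.

Section LevelMorphisms.
Variables X Y : invseq.
Hypothesis cont_bondX : forall n, continuous (@ibond X n).
Hypothesis cont_bondY : forall n, continuous (@ibond Y n).

Section LevelMap.
Variable f : forall n, iobj X n -> iobj Y n.
Hypothesis cont_f : forall n, continuous (f n).
Hypothesis bond_commute :
  forall n, homotopic (f n \o @ibond X n) (@ibond Y n \o f n.+1).

Lemma homotopic_level_bond_iter (n k : nat) :
  homotopic (f n \o @bond_iter X n k) (@bond_iter Y n k \o f (k + n)).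
Proof.
elim: k => [|k IH]; first exact: homotopic_refl.
apply: homotopic_trans (homotopic_precomp (cont_bondX (k + n)) IH) _.
exact: homotopic_postcomp (continuous_bond_iter cont_bondY n k)
                          (bond_commute (k + n)).
Qed.

Lemma level_pro_mor : @is_pro_mor X Y (fun n => n) f.
Proof.
split=> //; split=> // n m le_nm le_nm'.
move: (m - n)%N (subnK le_nm) => k E; subst m.
rewrite !pbondE; exact: homotopic_level_bond_iter.
Qed.

End LevelMap.

Lemma pro_equiv_level (g h : forall n, iobj X n -> iobj Y n) :
  (forall n, homotopic (g n) (h n)) -> @pro_equiv X Y (fun n => n) g (fun n => n) h.
Proof. by move=> gh n; exists n, (leqnn n), (leqnn n); rewrite !pbond_refl. Qed.

End LevelMorphisms.

Lemma pro_isomorphic_level (X Y : invseq)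
    (f : forall n, iobj X n -> iobj Y n) (g : forall n, iobj Y n -> iobj X n) :
  (forall n, continuous (@ibond X n)) -> (forall n, continuous (@ibond Y n)) ->
  (forall n, continuous (f n)) -> (forall n, continuous (g n)) ->
  (forall n, homotopic (f n \o @ibond X n) (@ibond Y n \o f n.+1)) ->
  (forall n, homotopic (g n \o @ibond Y n) (@ibond X n \o g n.+1)) ->
  (forall n, homotopic (g n \o f n) id) -> (forall n, homotopic (f n \o g n) id) ->
  pro_isomorphic X Y.
Proof.
move=> cX cY cf cg f_commute g_commute gf fg.
exists (fun n => n), f, (fun n => n), g; split; last split; last split.
- exact: level_pro_mor.
- exact: level_pro_mor.
- exact: pro_equiv_level.
- exact: pro_equiv_level.
Qed.

Theorem theorem3p5 (X : nat -> topologicalType)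
    (q : forall n, X n.+1 -> X n)
    (hfin : forall n, finite_T0 (X n))
    (hq : forall n, continuous (q n))
    (C : forall n, set (X n))
    (hC : forall n, is_core (C n))
    (r : forall n, X n -> set_type (C n))
    (hr : forall n, continuous (r n))
    (hri : forall n (c : set_type (C n)), r n (set_val c) = c)
    (hir : forall n, homotopic (set_val \o r n) id) :
  pro_isomorphic (@InvSeq X q) (core_seq q r).
Proof.
have cont_i n : continuous (@set_val _ (C n)) by exact: initial_continuous.
have cont_qi n : continuous (q n \o @set_val _ (C n.+1)).
  by move=> x; exact: continuous_comp (cont_i _ _) (hq _ _).
have cont_rq n : continuous (r n \o q n).
  by move=> x; exact: continuous_comp (hq _ _) (hr _ _).
apply: (@pro_isomorphic_level (InvSeq q) (core_seq q r) r
                               (fun n => @set_val _ (C n))) => // n.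
- by move=> x; exact: continuous_comp (cont_qi _ _) (hr _ _).
- exact: homotopic_postcomp (cont_rq n) (homotopic_sym (hir n.+1)).
- exact: homotopic_precomp (cont_qi n) (hir n).
- have -> : r n \o set_val = id by apply/funext => c; exact: hri.
  by apply: homotopic_refl => x; exact: cvg_id.
Qed.
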